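(* Let $r\ge2$, $k\ge3$ and let $\widehat{F}_k$ be an $r$-coloring of $K_k$. If $G$ is an $(r,\widehat{F}_k)$-extremal graph and $u,v\in V(G)$ are non-adjacent vertices, then the graph obtained from $G$ by deleting $v$ and adding a new vertex that is a twin of $u$ (non-adjacent to $u$ and with the same neighborhood as $u$ in $G-v$) is also $(r,\widehat{F}_k)$-extremal.
   Context: An $r$-coloring of a graph assigns colors from $\{1,\dots,r\}$ to edges (not necessarily properly). A copy of $\widehat{F}_k$ in a colored graph is a set of $k$ pairwise adjacent vertices admitting a bijection to $V(K_k)$ under which two edges have equal colors iff their images have equal colors in $\widehat{F}_k$; a coloring is $\widehat{F}_k$-free if it has no copy. $c_{r,\widehat{F}_k}(G)$ is the number of $\widehat{F}_k$-free $r$-colorings of $E(G)$, $c_{r,\widehat{F}_k}(n)$ its maximum over $n$-vertex graphs, and an $n$-vertex graph $G$ is $(r,\widehat{F}_k)$-extremal if $c_{r,\widehat{F}_k}(G)=c_{r,\widehat{F}_k}(n)$. *)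

From mathcomp Require Import all_boot.
Set Implicit Arguments. Unset Strict Implicit. Unset Printing Implicit Defensive.

Definition simple_graph n (G : {set {set 'I_n}}) : bool :=
  [forall e in G, #|e| == 2].

Definition adj n (G : {set {set 'I_n}}) (x y : 'I_n) : bool := [set x; y] \in G.

Definition edgeT n (G : {set {set 'I_n}}) := {e : {set 'I_n} | e \in G}.

Definition coloring n (G : {set {set 'I_n}}) r := {ffun edgeT G -> 'I_r}.

Definition col n (G : {set {set 'I_n}}) r (c : coloring G r) (x y : 'I_n)
  : option 'I_r := omap c (insub [set x; y]).

(* A pattern: an r-coloring of K_k, the colour of edge {i,j} being F [set i; j]
   (values on non-2-subsets are irrelevant). *)
Definition pattern k r := {ffun {set 'I_k} -> 'I_r}.

Definition has_copy n (G : {set {set 'I_n}}) r (c : coloring G r) k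
  (F : pattern k r) : bool :=
  [exists f : {ffun 'I_k -> 'I_n},
    [&& injectiveb f,
        [forall i, forall j, (i != j) ==> adj G (f i) (f j)] &
        [forall i, forall j, forall i', forall j',
           ((i != j) && (i' != j')) ==>
           ((col c (f i) (f j) == col c (f i') (f j'))
              == (F [set i; j] == F [set i'; j']))]]].

Definition free_coloring n (G : {set {set 'I_n}}) r k (F : pattern k r)
  (c : coloring G r) : bool := ~~ has_copy c F.

Definition count_free n (G : {set {set 'I_n}}) r k (F : pattern k r) : nat :=
  #|[set c : coloring G r | free_coloring F c ]|.

Definition count_free_max n r k (F : pattern k r) : nat :=
  \max_(H : {set {set 'I_n}} | simple_graph H) count_free H F.

Definition extremal n (G : {set {set 'I_n}}) r k (F : pattern k r) : Prop :=
  simple_graph G /\ count_free G F = count_free_max n F.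

(* Delete v and add a new vertex (placed at the index v) which is a twin of u:
   adjacent exactly to the neighbours of u. *)
Definition twin_replace n (G : {set {set 'I_n}}) (u v : 'I_n) : {set {set 'I_n}} :=
  [set e in G | v \notin e] :|: [set [set v; x] | x in 'I_n & adj G u x].

From mathcomp Require Import all_boot fingroup perm.
Set Implicit Arguments. Unset Strict Implicit. Unset Printing Implicit Defensive.

(* Zykov symmetrization.  Group the F-free colourings of G by their restriction
   [phi] to the edges avoiding u and v.  Since u and v are non-adjacent, such a
   colouring is determined by its restrictions to G - v and G - u, so
   c(G) <= sum_phi a_phi b_phi, where a_phi and b_phi count the F-free
   colourings of G - v and G - u extending phi.  Conversely, two F-free
   colourings of G - v extending phi glue, the second one transported to the
   twin of u, into an F-free colouring of the graph where v is replaced by a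
   twin of u: a copy of F cannot use both twins, which are non-adjacent.  Hence
   sum_phi a_phi^2 <= c(G_{u->v}) and likewise sum_phi b_phi^2 <= c(G_{v->u}),
   so 2 c(G) <= c(G_{u->v}) + c(G_{v->u}) by AM-GM, and both twin graphs are
   extremal when G is. *)

Lemma card_fibers (T T' : finType) (f : T -> T') (S : {set T}) :
  #|S| = \sum_(y : T') #|[set x in S | f x == y]|.
Proof.
rewrite -sum1_card (partition_big f predT) //.
by apply: eq_bigr => y _; rewrite sum1dep_card.
Qed.

Lemma preimset_perm2 (T : finType) (s : {perm T}) (a b : T) :
  s @^-1: [set a; b] = [set s^-1%g a; s^-1%g b].
Proof. by rewrite -im_permV imsetU1 imset_set1. Qed.

Section PartialColorings.
Variables (n r k : nat) (F : pattern k r).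

(* Colourings of all graphs on 'I_n live in a single type: a colouring of G is
   a partial colouring of the vertex subsets whose support is exactly G. *)
Definition pcoloring := {ffun {set 'I_n} -> option 'I_r}.

Implicit Types (g h : pcoloring) (G : {set {set 'I_n}}) (f : {ffun 'I_k -> 'I_n}).

Definition pcopy g f : bool :=
  [&& injectiveb f,
      [forall i, forall j, (i != j) ==> (g [set f i; f j] != None)] &
      [forall i, forall j, forall i', forall j',
         ((i != j) && (i' != j')) ==>
         ((g [set f i; f j] == g [set f i'; f j'])
            == (F [set i; j] == F [set i'; j']))]].

Definition has_pcopy g : bool := [exists f, pcopy g f].

Definition supported_on g G : bool := [forall e, (g e != None) == (e \in G)].

Definition pcoloring_of G (c : coloring G r) : pcoloring :=
  [ffun e => omap c (insub e)].

Definition free_pcolorings G : {set pcoloring} :=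
  [set g | supported_on g G && ~~ has_pcopy g].

Lemma pcopy_eq g g' f f' :
  injectiveb f' = injectiveb f ->
  (forall i j, i != j -> g' [set f' i; f' j] = g [set f i; f j]) ->
  pcopy g' f' = pcopy g f.
Proof.
move=> eq_inj eq_g; rewrite /pcopy eq_inj; congr [&& _, _ & _].
  apply: eq_forallb => i; apply: eq_forallb => j.
  by case: eqP => // /eqP ij; rewrite eq_g.
apply: eq_forallb => i; apply: eq_forallb => j.
apply: eq_forallb => i'; apply: eq_forallb => j'.
by case: (i =P j) => //= /eqP ij; case: (i' =P j') => //= /eqP ij'; rewrite !eq_g.
Qed.

Lemma has_copy_pcoloring_of G (c : coloring G r) :
  has_copy c F = has_pcopy (pcoloring_of c).
Proof.
apply: eq_existsb => f; rewrite /pcopy; congr [&& _, _ & _].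
  apply: eq_forallb => i; apply: eq_forallb => j.
  by rewrite /adj ffunE; case: insubP => [? -> _|/negPf ->].
apply: eq_forallb => i; apply: eq_forallb => j.
apply: eq_forallb => i'; apply: eq_forallb => j'.
by rewrite /col !ffunE.
Qed.

Lemma supported_onE g G e : supported_on g G -> (g e != None) = (e \in G).
Proof. by move/forallP/(_ e)/eqP. Qed.

Lemma supported_on_None g G e : supported_on g G -> e \notin G -> g e = None.
Proof. by move/(supported_onE e) => <-; case: (g e). Qed.

Lemma pcoloring_ofK G (c : coloring G r) (d : 'I_r) (e : edgeT G) :
  odflt d (pcoloring_of c (val e)) = c e.
Proof. by rewrite ffunE valK. Qed.

Lemma count_free_pcolorings G : 0 < r -> count_free G F = #|free_pcolorings G|.
Proof.
move=> r_gt0; pose d : 'I_r := Ordinal r_gt0.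
rewrite /count_free -(card_in_imset (f := @pcoloring_of G)); last first.
  move=> c1 c2 _ _ eq_c; apply/ffunP => e.
  by rewrite -(pcoloring_ofK c1 d) -(pcoloring_ofK c2 d) eq_c.
apply: eq_card => g; rewrite [in RHS]inE; apply/imsetP/andP.
  case=> c; rewrite inE /free_coloring has_copy_pcoloring_of => free_c ->.
  split=> //; apply/forallP => e; rewrite ffunE.
  by case: insubP => [[x Gx] _ <-|/negPf ->] //=; rewrite Gx.
case=> supp_g free_g.
have gE : pcoloring_of [ffun x : edgeT G => odflt d (g (val x))] = g.
  apply/ffunP => e; rewrite !ffunE; case: insubP => [x Ge <-|Ge] /=.
    by rewrite ffunE; move: (supported_onE (val x) supp_g); rewrite (valP x); case: (g _).
  by rewrite (supported_on_None supp_g Ge).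
by eexists; last exact/esym/gE; rewrite inE /free_coloring has_copy_pcoloring_of gE.
Qed.

Definition prune (p : pred {set 'I_n}) g : pcoloring :=
  [ffun e => if p e then None else g e].

Definition delv (w : 'I_n) g := prune (fun e => w \in e) g.

Definition core (u v : 'I_n) g := prune (fun e => (u \in e) || (v \in e)) g.

Lemma core_sym (u v : 'I_n) : core u v =1 core v u.
Proof. by move=> g; apply/ffunP => e; rewrite !ffunE orbC. Qed.

Lemma has_pcopy_prune p g : has_pcopy (prune p g) -> has_pcopy g.
Proof.
case/existsP => f copy_f; apply/existsP; exists f.
rewrite -(pcopy_eq (g := g) (g' := prune p g) (f' := f)) // => i j ij.
case/and3P: copy_f => _ /forallP /(_ i) /forallP /(_ j) /implyP /(_ ij) + _.
by rewrite !ffunE; case: ifP.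
Qed.

(* A copy cannot contain two non-adjacent vertices. *)
Lemma has_pcopy_delv (u v : 'I_n) g : u != v -> g [set u; v] = None ->
  has_pcopy g -> has_pcopy (delv v g) || has_pcopy (delv u g).
Proof.
move=> uv g_uv /existsP [f copy_f].
case/and3P: (copy_f) => /injectiveP inj_f /forallP adj_f _.
have edge_f i j : i != j -> g [set f i; f j] != None.
  by move=> ij; move: (adj_f i) => /forallP /(_ j) /implyP /(_ ij).
have copy_delv w : (forall i, f i != w) -> has_pcopy (delv w g).
  move=> fw; apply/existsP; exists f.
  rewrite (pcopy_eq (g := g) (f := f)) // => a b _; rewrite ffunE.
  by case: ifP => // /set2P [] wE; [move: (fw a) | move: (fw b)]; rewrite -wE eqxx.
case: (pickP (fun i => f i == v)) => [i /eqP fi_v|fv]; last first.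
  by rewrite copy_delv // => i; rewrite fv.
apply/orP; right; apply: copy_delv => j; apply/eqP => fj_u.
have ji : j != i by apply: contraNneq uv => ji; rewrite -fj_u -fi_v ji.
by move: (edge_f _ _ ji); rewrite fj_u fi_v g_uv.
Qed.

Definition relabel (s : {perm 'I_n}) g : pcoloring :=
  [ffun e : {set 'I_n} => g (s @^-1: e)].

Lemma has_pcopy_relabel (s : {perm 'I_n}) g : has_pcopy (relabel s g) -> has_pcopy g.
Proof.
case/existsP => f copy_f; apply/existsP; exists [ffun i => s^-1%g (f i)].
rewrite (pcopy_eq (g := relabel s g) (f := f)) //.
  apply/injectiveP/injectiveP => inj_f x y.
    by move=> fxy; apply: inj_f; rewrite !ffunE fxy.
  by rewrite !ffunE => /perm_inj /inj_f.
by move=> i j _; rewrite !ffunE preimset_perm2.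
Qed.

Lemma relabel_tpermK (x y : 'I_n) g (e : {set 'I_n}) :
  relabel (tperm x y) g (tperm x y @^-1: e) = g e.
Proof. by rewrite ffunE; congr (g _); apply/setP => z; rewrite !inE tpermK. Qed.

Definition splice (v : 'I_n) g h : pcoloring :=
  [ffun e : {set 'I_n} => if v \in e then h e else g e].

Definition delete_vertex G (w : 'I_n) := [set e in G | w \notin e].

Definition free_fiber G (w u v : 'I_n) phi :=
  [set h in free_pcolorings (delete_vertex G w) | core u v h == phi].

Lemma mem_free_pcolorings g G :
  (g \in free_pcolorings G) = supported_on g G && ~~ has_pcopy g.
Proof. by rewrite inE. Qed.

Lemma mem_free_fiber h G (w u v : 'I_n) phi :
  (h \in free_fiber G w u v phi) =
  [&& supported_on h (delete_vertex G w), core u v h == phi & ~~ has_pcopy h].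
Proof. by rewrite !inE -andbA [_ && (_ == _)]andbC. Qed.

Lemma supported_on_delv g G (w : 'I_n) :
  supported_on g G -> supported_on (delv w g) (delete_vertex G w).
Proof.
move=> supp_g; apply/forallP => e; rewrite !inE ffunE -(supported_onE e supp_g).
by case: (w \in e); case: (g e).
Qed.

Lemma core_delv (u v : 'I_n) g : core u v (delv v g) = core u v g.
Proof. by apply/ffunP => e; rewrite !ffunE; case: (u \in e); case: (v \in e). Qed.

Section Symmetrization.
Variables (G : {set {set 'I_n}}) (u v : 'I_n).
Hypotheses (simple_G : simple_graph G) (uv : u != v) (nadj_uv : ~~ adj G u v).

Let t := tperm u v.

Lemma card_edge e : e \in G -> #|e| = 2.
Proof. by move: simple_G => /forallP /(_ e) /implyP H /H /eqP. Qed.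

Lemma edge_not_uv e : e \in G -> u \in e -> v \notin e.
Proof.
move=> Ge ue; apply/negP => ve; have : [set u; v] == e.
  rewrite eqEcard cards2 uv card_edge // andbT.
  by apply/subsetP => x; rewrite !inE => /orP [] /eqP ->.
by move/eqP => uvE; move: nadj_uv; rewrite /adj uvE Ge.
Qed.

Lemma restrict_delv_inj :
  {in free_pcolorings G &, injective (fun g => (delv v g, delv u g))}.
Proof.
move=> g1 g2; rewrite !mem_free_pcolorings => /andP [supp1 _] /andP [supp2 _].
case=> /ffunP eq_v /ffunP eq_u; apply/ffunP => e.
move: (eq_v e) (eq_u e); rewrite !ffunE.
case: (boolP (v \in e)) => ve; case: (boolP (u \in e)) => ue //= _ _.
have Ge : e \notin G by apply: contraL ve => /edge_not_uv; apply.
by rewrite (supported_on_None supp1 Ge) (supported_on_None supp2 Ge).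
Qed.

Lemma card_free_le_sum_fibers :
  #|free_pcolorings G| <=
  \sum_(phi : pcoloring) #|free_fiber G v u v phi| * #|free_fiber G u u v phi|.
Proof.
rewrite (card_fibers (core u v)); apply: leq_sum => phi _.
have sub_free :
    {subset [set g in free_pcolorings G | core u v g == phi] <= free_pcolorings G}.
  by move=> g; rewrite inE => /andP [].
rewrite -cardsX -(card_in_imset (sub_in2 sub_free restrict_delv_inj)).
apply/subset_leq_card/subsetP => p /imsetP [g]; rewrite inE => /andP [free_g core_g] ->.
move: free_g; rewrite in_setX !mem_free_fiber mem_free_pcolorings => /andP [supp_g free_g].
rewrite -(eqP core_g) core_delv [core u v (delv u g)]core_sym core_delv core_sym !eqxx.
rewrite !supported_on_delv //=.
by apply/andP; split; apply: contra free_g; apply: has_pcopy_prune.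
Qed.

Lemma mem_twin_replace e : (e \in twin_replace G u v) =
  if v \in e then (t @^-1: e \in G) && (u \notin e) else e \in G.
Proof.
have t_preimK : t @^-1: (t @^-1: e) = e by apply/setP => x; rewrite !inE tpermK.
rewrite /twin_replace !inE; case ve: (v \in e) => /=; last first.
  by rewrite andbT orb_idr // => /imsetP [x _ eE]; rewrite eE !inE eqxx in ve.
rewrite andbF /=; apply/imsetP/andP.
  case=> x; rewrite inE => ux ->.
  have xu : x != u by apply/eqP => xu; move: (card_edge ux); rewrite xu setUid cards1.
  have xv : x != v by apply: contraNneq _ nadj_uv => <-.
  rewrite preimset_perm2 tpermV tpermR tpermD 1?eq_sym //; split=> //.
  by rewrite !inE negb_or uv eq_sym xu.
case=> Gte ue.
have [x teE] : exists x, t @^-1: e = [set u; x].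
  have : u \in t @^-1: e by rewrite inE tpermL.
  move: (card_edge Gte) => /eqP /cards2P [a [b [_ ->]]].
  by rewrite !inE => /orP [] /eqP ->; [exists b | exists a; rewrite setUC].
have xu : x != u by apply/eqP => xu; move: (card_edge Gte); rewrite teE xu setUid cards1.
have xv : x != v.
  apply: contra ue => /eqP xv.
  by rewrite -t_preimK teE preimset_perm2 tpermV xv tpermR !inE eqxx orbT.
exists x; last by rewrite -t_preimK teE preimset_perm2 tpermV tpermL tpermD 1?eq_sym.
by rewrite inE /adj -teE.
Qed.

Lemma simple_twin_replace : simple_graph (twin_replace G u v).
Proof.
apply/forallP => e; apply/implyP; rewrite /twin_replace !inE.
case/orP => [/andP [Ge _]|/imsetP [x]]; first by rewrite card_edge.
rewrite inE => /andP [_ ux] ->; rewrite cards2 eqSS eqb1.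
by apply: contraNneq _ nadj_uv => ->.
Qed.

Let twin_coloring (p : pcoloring * pcoloring) := splice v p.1 (relabel t p.2).

Lemma twin_coloring_inj phi :
  {in setX (free_fiber G v u v phi) (free_fiber G v u v phi) &, injective twin_coloring}.
Proof.
move=> [h1 h2] [k1 k2]; rewrite !in_setX !mem_free_fiber /=.
case/andP => /and3P [s1 c1 _] /and3P [s2 c2 _].
case/andP => /and3P [t1 d1 _] /and3P [t2 d2 _] /ffunP eq_twin.
have nG (e : {set 'I_n}) : v \in e -> e \notin delete_vertex G v.
  by move=> ve; rewrite !inE ve andbF.
congr pair; apply/ffunP => e.
  move: (eq_twin e); rewrite !ffunE; case: ifP => // ve _.
  by rewrite (supported_on_None s1 (nG _ ve)) (supported_on_None t1 (nG _ ve)).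
case ve: (v \in e).
  by rewrite (supported_on_None s2 (nG _ ve)) (supported_on_None t2 (nG _ ve)).
case ue: (u \in e).
  move: (eq_twin (t @^-1: e)); rewrite [twin_coloring _ _]ffunE [twin_coloring _ _]ffunE.
  by rewrite inE tpermR ue !relabel_tpermK.
have := congr1 (fun g : pcoloring => g e) (etrans (eqP c2) (esym (eqP d2))).
by rewrite !ffunE ue ve.
Qed.

Lemma twin_coloring_free phi h1 h2 :
  h1 \in free_fiber G v u v phi -> h2 \in free_fiber G v u v phi ->
  twin_coloring (h1, h2) \in free_pcolorings (twin_replace G u v).
Proof.
rewrite !mem_free_fiber => /and3P [s1 c1 f1] /and3P [s2 c2 f2].
have h12 (e : {set 'I_n}) : u \notin e -> v \notin e -> h1 e = h2 e.
  move=> ue ve.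
  have := congr1 (fun g : pcoloring => g e) (etrans (eqP c1) (esym (eqP c2))).
  by rewrite !ffunE (negPf ue) (negPf ve).
rewrite mem_free_pcolorings; apply/andP; split.
  apply/forallP => e; rewrite mem_twin_replace !ffunE.
  case ve: (v \in e); first by rewrite (supported_onE _ s2) !inE tpermR.
  by rewrite (supported_onE _ s1) !inE ve andbT.
apply: contra f1 => copy_twin.
have twin_uv : twin_coloring (h1, h2) [set u; v] = None.
  rewrite !ffunE !inE eqxx orbT preimset_perm2 tpermV tpermL tpermR.
  by rewrite (supported_on_None s2) // !inE eqxx andbF.
case/orP: (has_pcopy_delv uv twin_uv copy_twin) => copy_del.
  apply: (@has_pcopy_prune (fun e => v \in e)).
  congr (has_pcopy _): copy_del; apply/ffunP => e; rewrite !ffunE.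
  by case: (v \in e).
case/negP: f2; apply: (@has_pcopy_prune (fun e => v \in e)).
apply: (@has_pcopy_relabel t).
congr (has_pcopy _): copy_del; apply/ffunP => e; rewrite !ffunE inE tpermR.
case ue: (u \in e) => //; case ve: (v \in e) => //.
have -> : t @^-1: e = e.
  by apply/setP => x; rewrite inE; case: tpermP => [->|->|] //; rewrite ?ue ?ve.
by rewrite h12 ?ue ?ve.
Qed.

Lemma sum_sqr_fibers_le_card_free_twin :
  \sum_(phi : pcoloring) #|free_fiber G v u v phi| * #|free_fiber G v u v phi|
    <= #|free_pcolorings (twin_replace G u v)|.
Proof.
rewrite [X in _ <= X](card_fibers (core u v)); apply: leq_sum => phi _.
rewrite -cardsX -(card_in_imset (@twin_coloring_inj phi)).
apply/subset_leq_card/subsetP => _ /imsetP [[h1 h2] /setXP [fib1 fib2] ->].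
rewrite inE (twin_coloring_free fib1 fib2) /=.
move: fib1; rewrite mem_free_fiber => /and3P [_ /eqP <- _].
by apply/eqP/ffunP => e; rewrite !ffunE; case: (u \in e); case: (v \in e).
Qed.

End Symmetrization.

Lemma count_free_twin_replace G (u v : 'I_n) :
  0 < r -> simple_graph G -> u != v -> ~~ adj G u v ->
  (count_free G F).*2 <=
    count_free (twin_replace G u v) F + count_free (twin_replace G v u) F.
Proof.
move=> r_gt0 simple_G uv nadj_uv.
have vu : v != u by rewrite eq_sym.
have nadj_vu : ~~ adj G v u by rewrite /adj setUC.
rewrite !count_free_pcolorings //.
pose a phi := #|free_fiber G v u v phi|; pose b phi := #|free_fiber G u u v phi|.
have lower_vu : \sum_phi b phi * b phi <= #|free_pcolorings (twin_replace G v u)|.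
  rewrite (eq_bigr (fun phi => #|free_fiber G u v u phi| * #|free_fiber G u v u phi|)).
    exact: sum_sqr_fibers_le_card_free_twin.
  by move=> phi _; congr (_ * _); apply: eq_card => h; rewrite !mem_free_fiber core_sym.
have amgm : (\sum_phi a phi * b phi).*2 <= \sum_phi a phi * a phi + \sum_phi b phi * b phi.
  rewrite -big_split -mul2n big_distrr /=; apply: leq_sum => phi _.
  by rewrite !mulnn (nat_Cauchy (a phi) (b phi)).1.
apply: leq_trans (leq_add (sum_sqr_fibers_le_card_free_twin simple_G uv nadj_uv) lower_vu).
by apply: leq_trans amgm; rewrite leq_double card_free_le_sum_fibers.
Qed.

End PartialColorings.

Theorem corollary2p9 (r k n : nat) (F : pattern k r) (G : {set {set 'I_n}})
    (u v : 'I_n) :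
  2 <= r -> 3 <= k ->
  extremal G F -> u != v -> ~~ adj G u v ->
  extremal (twin_replace G u v) F.
Proof.
move=> r_ge2 _ [simple_G max_G] uv nadj_uv.
have le_max (H : {set {set 'I_n}}) : simple_graph H -> count_free H F <= count_free_max n F.
  exact: (@leq_bigmax_cond _ (@simple_graph n) (fun H => count_free H F) H).
have nadj_vu : ~~ adj G v u by rewrite /adj setUC.
have simple_uv := simple_twin_replace simple_G nadj_uv.
have simple_vu := simple_twin_replace simple_G nadj_vu.
split=> //; apply/eqP; rewrite eqn_leq le_max //=.
rewrite -(leq_add2r (count_free_max n F)) -{1 2}max_G addnn.
apply: leq_trans (count_free_twin_replace F (ltnW r_ge2) simple_G uv nadj_uv) _.
by rewrite leq_add2l le_max.
Qed.
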